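(* For every positive integer $s$ and all integers $i\ge 0$ and $j$, the number $h_{s,i,j}$ defined in the context is an integer.
   Context: For a fixed positive integer $s$, the numbers $h_{s,i,j}$ (integers $i\ge 0$, $j$) are defined recursively by: $h_{s,i,j}=0$ if $j\le i$; for $i=0$ and $j\ge 1$, $h_{s,0,j}=\binom{s+j-1}{j}\frac{s-j}{s}$; for $i>0$ and $j>i$, $h_{s,i,j}=-\frac{s-j+1}{i}h_{s,i-1,j-1}-\frac{j-i}{i}h_{s,i-1,j}$. *)

From mathcomp Require Import all_boot all_order all_algebra.
Set Implicit Arguments. Unset Strict Implicit. Unset Printing Implicit Defensive.
Import Order.TTheory GRing.Theory Num.Theory.
Local Open Scope ring_scope.

Fixpoint h (s i : nat) (j : int) {struct i} : rat :=
  match i with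
  | 0%N =>
      match j with
      | Posz jn =>
          if (jn == 0)%N then 0
          else ('C(s + jn - 1, jn))%:R * ((s%:R - jn%:R) / s%:R)
      | Negz _ => 0
      end
  | i'.+1 =>
      if (j <= (i'.+1)%:Z)%R then 0
      else - ((s%:R - j%:~R + 1) / (i'.+1)%:R) * h s i' (j - 1)
           - ((j%:~R - (i'.+1)%:R) / (i'.+1)%:R) * h s i' j
  end.

From mathcomp Require Import all_boot all_order all_algebra.
From mathcomp Require Import zify ring.
Import GRing.Theory Num.Theory.
Local Open Scope ring_scope.

(* With H_i(x) = \sum_j h_{s,i,j} x^j, the recurrence reads
   i H_i = (M + i) H_(i-1) for M = (x - 1) x d/dx - s x, and M e_a = -a e_a
   for e_a = x^a (1 - x)^(s - a).  The e_a have integer coefficients and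
   start with x^a, so the integral series H_0 is an integral combination
   \sum_a c_a e_a, found by solving a unitriangular system.  Then
   H_i = \sum_a c_a binom(i - a, i) e_a, whose coefficients are integers.
   Only coefficients of order at most some N are ever needed, so a finite
   system suffices. *)

(* Binomial coefficient with an integer upper argument; for negative r it is
   given by upper negation, binom(-m-1, k) = (-1)^k binom(m+k, k). *)
Definition binz (r : int) (k : nat) : int :=
  match r with
  | Posz m => 'C(m, k)%:Z
  | Negz m => (-1) ^+ k * 'C(m + k, k)%:Z
  end.

Lemma binz0 r : binz r 0 = 1.
Proof. by case: r => m; rewrite /= ?addn0 bin0 ?mulr1. Qed.

Lemma binzz (n : nat) : binz n n = 1.
Proof. by rewrite /= binn. Qed.

Lemma mul_binz_diag r k : k.+1%:Z * binz r k.+1 = r * binz (r - 1) k.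
Proof.
case: r => [[|m]|m].
- by rewrite /= bin0n mulr0 mul0r.
- have -> : m.+1%:Z - 1 = m by lia.
  by rewrite /= -!PoszM -mul_bin_diag.
- have -> : Negz m - 1 = Negz m.+1 by rewrite !NegzE; lia.
  have bin_step : k.+1%:Z * 'C(m + k.+1, k.+1)%:Z = m.+1%:Z * 'C(m + k.+1, k)%:Z.
    by rewrite -!PoszM mul_bin_left; congr (Posz (_ * _)); lia.
  rewrite /binz NegzE exprS addSnnS.
  transitivity (- ((-1) ^+ k * (k.+1%:Z * 'C(m + k.+1, k.+1)%:Z))); first by ring.
  by rewrite bin_step; ring.
Qed.

Lemma unitriangular_solvable (R : pzRingType) (E : nat -> nat -> R) (f : nat -> R) (N : nat) :
  (forall n, E n n = 1) -> (forall a n, (n < a)%N -> E a n = 0) ->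
  exists c : nat -> R, forall n, (n <= N)%N -> \sum_(a < N.+1) c a * E a n = f n.
Proof.
move=> E_diag E_upper; elim: N => [|N [c c_solves]].
  exists (fun=> f 0%N) => n; rewrite leqn0 => /eqP ->.
  by rewrite big_ord1 E_diag mulr1.
pose cN := f N.+1 - \sum_(a < N.+1) c a * E a N.+1.
exists (fun a => if a == N.+1 then cN else c a) => n n_le.
rewrite big_ord_recr /= eqxx.
under eq_bigr => a _ do rewrite ltn_eqF //.
case: (ltngtP n N.+1) n_le => // [n_lt _ | -> _].
  by rewrite E_upper // mulr0 addr0 c_solves.
by rewrite E_diag mulr1 addrC subrK.
Qed.

Section Recurrence.

Variable s : nat.
Hypothesis s_gt0 : (0 < s)%N.

Definition h0z (n : nat) : int := 'C(s + n - 1, n)%:Z - 'C(s + n - 1, n.-1)%:Z.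

Lemma h0E (n : nat) : h s 0 n = (h0z n)%:~R.
Proof.
rewrite /h0z; case: n => [|n] /=; first by rewrite subrr.
have -> : (s + n.+1 - 1 = s + n)%N by lia.
have bin_step : n.+1%:R * 'C(s + n, n.+1)%:R = s%:R * 'C(s + n, n)%:R :> rat.
  by rewrite -!natrM mul_bin_left addnK.
have s_neq0 : s%:R != 0 :> rat by rewrite pnatr_eq0 -lt0n.
rewrite intrB /=.
apply: (mulfI s_neq0).
rewrite mulrBr -bin_step.
by field.
Qed.

Lemma h_eq0 i (n : nat) : (n <= i)%N -> h s i n = 0.
Proof.
case: i => [|i] n_le /=; first by have -> : n = 0%N by lia.
by rewrite lez_nat n_le.
Qed.

(* Unlike the definition of [h], this also holds when [n.+1 <= i.+1]. *)
Lemma hSS i (n : nat) : h s i.+1 n.+1 =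
  - ((s%:R - n%:R) / i.+1%:R) * h s i n - ((n%:R - i%:R) / i.+1%:R) * h s i n.+1.
Proof.
rewrite [LHS]/= lez_nat ltnS; case: leqP => [n_le | i_lt].
  rewrite h_eq0 // mulr0 sub0r.
  case: (ltngtP n i) n_le => // [n_lt _ | -> _]; last by rewrite subrr mul0r mul0r oppr0.
  by rewrite h_eq0 // mulr0 oppr0.
have -> : n.+1%:Z - 1 = n by lia.
by rewrite -[n.+1%:~R]/(n.+1%:R); ring.
Qed.

(* [eigvec a n] is the coefficient of x^n in e_a, and [eigfactor i a] is
   binom(i - a, i). *)
Definition eigvec (a n : nat) : int :=
  if (a <= n)%N then binz (n%:Z - 1 - s%:Z) (n - a) else 0.

Definition eigfactor (i a : nat) : int := binz (i%:Z - a%:Z) i.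

Lemma eigvec_diag n : eigvec n n = 1.
Proof. by rewrite /eigvec leqnn subnn binz0. Qed.

Lemma eigvec_upper a n : (n < a)%N -> eigvec a n = 0.
Proof. by rewrite /eigvec ltnNge => /negbTE ->. Qed.

Lemma eigvecn0 a : eigvec a 0 = (a == 0%N)%:R.
Proof. by case: a => [|a]; rewrite ?eigvec_diag ?eigvec_upper. Qed.

Lemma mul_eigvecS a n : (n.+1%:Z - a%:Z) * eigvec a n.+1 = (n%:Z - s%:Z) * eigvec a n.
Proof.
rewrite /eigvec; case: (ltngtP a n.+1) => a_n.
- move: a_n; rewrite ltnS => a_le; rewrite a_le subSn //.
  have -> : n.+1%:Z - a%:Z = (n - a).+1 by lia.
  by rewrite mul_binz_diag; congr (_ * binz _ _); lia.
- by rewrite leqNgt (ltnW a_n) !mulr0.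
- by rewrite a_n subrr mul0r ltnn mulr0.
Qed.

Lemma eigfactor0 a : eigfactor 0 a = 1.
Proof. exact: binz0. Qed.

Lemma eigfactorn0 i : eigfactor i 0 = 1.
Proof. by rewrite /eigfactor subr0 binzz. Qed.

Lemma mul_eigfactorS i a : i.+1%:Z * eigfactor i.+1 a = (i.+1%:Z - a%:Z) * eigfactor i a.
Proof. by rewrite /eigfactor mul_binz_diag; congr (_ * binz _ _); lia. Qed.

Lemma mul_eigS i a n :
  i.+1%:Z * (eigfactor i.+1 a * eigvec a n.+1) =
  (n%:Z - s%:Z) * (eigfactor i a * eigvec a n) - (n%:Z - i%:Z) * (eigfactor i a * eigvec a n.+1).
Proof. rewrite mulrA mul_eigfactorS mulrCA -mul_eigvecS; ring. Qed.

Section Expansion.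

Variables (N : nat) (c : nat -> int).
Hypothesis c_solves : forall n, (n <= N)%N -> \sum_(a < N.+1) c a * eigvec a n = h0z n.

Definition heig (i n : nat) : int := \sum_(a < N.+1) c a * eigfactor i a * eigvec a n.

Lemma heigSS i n :
  i.+1%:Z * heig i.+1 n.+1 = (n%:Z - s%:Z) * heig i n - (n%:Z - i%:Z) * heig i n.+1.
Proof.
rewrite /heig !mulr_sumr -sumrB; apply: eq_bigr => a _.
by rewrite -!mulrA [LHS]mulrCA mul_eigS; ring.
Qed.

Lemma heign0 i : heig i 0 = c 0%N.
Proof.
rewrite /heig big_ord_recl eigfactorn0 eigvec_diag !mulr1 big1 ?addr0 // => a _.
by rewrite eigvecn0 mulr0.
Qed.

Lemma h_heig i n : (n <= N)%N -> h s i n = (heig i n)%:~R.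
Proof.
elim: i n => [|i IHi] n n_le.
  rewrite h0E -c_solves //; congr intmul.
  by apply: eq_bigr => a _; rewrite eigfactor0 mulr1.
case: n n_le => [|n] n_le.
  by rewrite h_eq0 // heign0 -(heign0 i) -IHi // h_eq0.
have i_neq0 : i.+1%:R != 0 :> rat by rewrite pnatr_eq0.
have heig_step : i.+1%:R * (heig i.+1 n.+1)%:~R =
    (n%:R - s%:R) * (heig i n)%:~R - (n%:R - i%:R) * (heig i n.+1)%:~R :> rat.
  by have := congr1 (intr : int -> rat) (heigSS i n); rewrite !(intrM, intrB).
rewrite hSS !IHi ?(ltnW n_le) // -(mulKf i_neq0 (heig i.+1 n.+1)%:~R) heig_step.
by field; rewrite nat1r.
Qed.

End Expansion.

End Recurrence.

Theorem corollary7 (s i : nat) (j : int) :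
  (0 < s)%N -> exists z : int, h s i j = z%:~R.
Proof.
move=> s_gt0; case: j => [n | n]; last by exists 0; case: i.
have [c c_solves] := @unitriangular_solvable _ _ (h0z s) n (@eigvec_diag s) (@eigvec_upper s).
by exists (heig s n c i n); apply: h_heig.
Qed.
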